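(* Let $X$ and $Y$ be metric spaces, and suppose that $Y$ is $\mathcal P$-connected and locally $\mathcal P$-contractible for some family $\mathcal P$ of paths. Then every weakly proper local homeomorphism $f:X\to Y$ is a covering projection.
   Context: A family $\mathcal P$ of continuous paths $p:[0,1]\to Y$ in a metric space $Y$ is given. $Y$ is $\mathcal P$-connected if (i) whenever $p\in\mathcal P$, the reverse path $\bar p(t)=p(1-t)$ belongs to $\mathcal P$, and (ii) every two points of $Y$ can be joined by a path in $\mathcal P$. $Y$ is locally $\mathcal P$-contractible if every $y_0\in Y$ has an open neighborhood $U$ with a continuous homotopy $H:U\times[0,1]\to U$ such that $H(y_0,t)=y_0$ for all $t$, $H(y,0)=y_0$ and $H(y,1)=y$ for all $y\in U$, and for every $y\in U$ the path $t\mapsto H(y,t)$ belongs to $\mathcal P$. A continuous map $f:X\to Y$ is weakly proper if for every compact $K\subset Y$, each connected component of $f^{-1}(K)$ is compact in $X$. *)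

From HB Require Import structures.
From mathcomp Require Import all_boot all_order all_algebra.
From mathcomp Require Import all_classical all_reals all_analysis.
Set Implicit Arguments. Unset Strict Implicit. Unset Printing Implicit Defensive.
Import Order.TTheory GRing.Theory Num.Theory.
Local Open Scope classical_set_scope.
Local Open Scope ring_scope.

(* Paths are represented as functions R -> Y; only their values on [0,1] are
   relevant for continuity, endpoints and reversal. *)
Definition is_path {R : realType} {Y : topologicalType} (p : R -> Y) : Prop :=
  {within `[0, 1], continuous p}.

Definition rev_path {R : realType} {Y : Type} (p : R -> Y) : R -> Y :=
  fun t => p (1 - t).

Definition P_connected {R : realType} {Y : topologicalType}
  (P : set (R -> Y)) : Prop :=
  (forall p, P p -> P (rev_path p)) /\
  (forall a b : Y, exists p, P p /\ p 0 = a /\ p 1 = b).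

Definition locally_P_contractible {R : realType} {Y : topologicalType}
  (P : set (R -> Y)) : Prop :=
  forall y0 : Y, exists U : set Y, open U /\ U y0 /\
    exists H : Y -> R -> Y,
      {within U `*` `[0, 1]%classic, continuous (fun z : Y * R => H z.1 z.2)} /\
      (forall y t, U y -> `[0, 1]%classic t -> U (H y t)) /\
      (forall t, `[0, 1]%classic t -> H y0 t = y0) /\
      (forall y, U y -> H y 0 = y0 /\ H y 1 = y) /\
      (forall y, U y -> P (H y)).

Definition homeo_onto {X Y : topologicalType} (f : X -> Y)
  (A : set X) (B : set Y) : Prop :=
  {within A, continuous f} /\ f @` A = B /\
  (forall a b, A a -> A b -> f a = f b -> a = b) /\
  exists g : Y -> X, (forall a, A a -> g (f a) = a) /\ {within B, continuous g}.

Definition local_homeomorphism {X Y : topologicalType} (f : X -> Y) : Prop :=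
  continuous f /\
  forall x : X, exists U : set X, open U /\ U x /\ open (f @` U) /\
    homeo_onto f U (f @` U).

Definition weakly_proper {X Y : topologicalType} (f : X -> Y) : Prop :=
  continuous f /\
  forall K : set Y, compact K ->
    forall x : X, (f @^-1` K) x -> compact (connected_component (f @^-1` K) x).

Definition covering_projection {X Y : topologicalType} (f : X -> Y) : Prop :=
  continuous f /\
  forall y : Y, exists U : set Y, open U /\ U y /\
    exists (I : Type) (V : I -> set X),
      f @^-1` U = \bigcup_(i in [set: I]) V i /\
      (forall i j, i <> j -> V i `&` V j = set0) /\
      (forall i, open (V i) /\ homeo_onto f (V i) U).

From HB Require Import structures.
From mathcomp Require Import all_boot all_order all_algebra.
From mathcomp Require Import all_classical all_reals all_analysis.
From mathcomp Require Import lra.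
Import Order.TTheory GRing.Theory Num.Theory.
Local Open Scope classical_set_scope.
Local Open Scope ring_scope.

(* Paths lift uniquely through the local homeomorphism f. A lift of a path p
   exists on [0, 1] by an open-closed argument on the set of times up to which
   p lifts: the lifts on [0, s], s < t, end in the connected component of the
   starting point in f^-1(p[0, 1]), which weak properness makes compact, so
   their endpoints accumulate at a point over p(t), and a chart there continues
   the lift past t. Lifts of the paths of a contraction H of a neighbourhood U
   of y0 depend continuously on their endpoint y, so each point x over y0
   yields a continuous section y |-> (endpoint of the lift of H y from x) of f
   over U. Its image is a sheet over U; the sheets cover f^-1(U) (lift reversed
   paths) and are pairwise disjoint (uniqueness of lifts). *)

Lemma within_comp_continuous {S T U : topologicalType} {A : set S} {B : set T}
    {p : S -> T} {g : T -> U} :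
  {within A, continuous p} -> (forall u, A u -> B (p u)) ->
  {within B, continuous g} -> {within A, continuous (g \o p)}.
Proof.
move=> /subspace_continuousP pc AB /subspace_continuousP gc.
apply/subspace_continuousP => x Ax N /= NN.
have := gc _ (AB _ Ax) _ NN; rewrite /= nbhs_simpl => M.
have := pc _ Ax _ M; rewrite /= !nbhs_simpl.
by apply: (filterS (P := fun u => A u -> B (p u) -> N (g (p u)))) => u Hu Au;
  exact: Hu Au (AB _ Au).
Qed.

Lemma jointly_continuous_near {R : realType} {Y : topologicalType} {U : set Y}
    {H : Y -> R -> Y} {y1 : Y} {t : R} {N : set Y} :
  {within U `*` `[0, 1]%classic, continuous (fun z : Y * R => H z.1 z.2)} ->
  U y1 -> `[0, 1]%classic t -> nbhs (H y1 t) N ->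
  exists M, nbhs y1 M /\ exists2 d : R, 0 < d & forall y u, U y ->
    `[0, 1]%classic u -> M y -> `|u - t| < d -> N (H y u).
Proof.
move=> /subspace_continuousP /(_ (y1, t)) Hc Uy1 It NN.
have := Hc (conj Uy1 It) _ NN; rewrite /= nbhs_simpl /within /=.
move=> [[M Q]] /= [nM nQ] MQ; exists M; split => //.
move: nQ => /nbhs_ballP [d d0 Hd]; exists d => // y u Uy Iu My ut.
by apply: (MQ (y, u)) => //; split => //=; apply: Hd; rewrite /ball /= distrC.
Qed.

Section RealSegments.
Context {R : realType}.
Local Notation "[| a , b |]" := (`[a, b]%classic : set R^o).

Lemma in_segmentP (a b u : R) : [|a, b|] u <-> a <= u /\ u <= b.
Proof. by rewrite /= in_itv; split => [/andP|[h1 h2]] //; apply/andP. Qed.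

Lemma segment_lb {a b : R} : a <= b -> [|a, b|] a.
Proof. by move=> ab; apply/in_segmentP; split. Qed.

Lemma segment_ub {a b : R} : a <= b -> [|a, b|] b.
Proof. by move=> ab; apply/in_segmentP; split. Qed.

Lemma subset_segment (a b c d : R) : c <= a -> b <= d -> [|a, b|] `<=` [|c, d|].
Proof. by move=> ca bd u /in_segmentP [h1 h2]; apply/in_segmentP; split; lra. Qed.

Lemma segment01_rev (t : R) : [|0, 1|] t -> [|0, 1|] (1 - t).
Proof. by move=> /in_segmentP [h1 h2]; apply/in_segmentP; split; lra. Qed.

Lemma within_continuous_near {T : topologicalType} {A : set R^o} {q : R -> T}
    {t : R} {N : set T} :
  {within A, continuous q} -> A t -> nbhs (q t) N ->
  exists2 d : R, 0 < d & forall s, A s -> `|s - t| < d -> N (q s).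
Proof.
move=> /subspace_continuousP /(_ t) qc At Nq.
have := qc At _ Nq; rewrite /= nbhs_simpl /within /=.
move=> /nbhs_ballP [d d0 Hd]; exists d => // s As st.
by apply: (Hd s) => //; rewrite /ball /= distrC.
Qed.

Lemma within_continuous_rev01 {T : topologicalType} {r : R -> T} :
  {within [|0, 1|], continuous r} ->
  {within [|0, 1|], continuous (fun t => r (1 - t))}.
Proof.
move=> rc; have c1 : {within [|0, 1|], continuous (fun t : R^o => 1 - t)}.
  by apply: continuous_subspaceT => t; apply: cvgB; [exact: cvg_cst|exact: cvg_id].
exact: (within_comp_continuous c1 segment01_rev rc).
Qed.

Lemma segment_connected_ind (a b c : R) (E : R -> Prop) : [|a, b|] c -> E c ->
  (forall t, [|a, b|] t -> E t ->
    exists2 d : R, 0 < d & forall s, [|a, b|] s -> `|s - t| < d -> E s) ->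
  (forall t, [|a, b|] t ->
    (forall d : R, 0 < d -> exists2 s, [|a, b|] s & `|s - t| < d /\ E s) -> E t) ->
  forall t, [|a, b|] t -> E t.
Proof.
move=> Ic Ec Eopen Eclosed.
pose B := [|a, b|] `&` E.
suff BE : B = [|a, b|] by move=> t It; have [] : B t by rewrite BE.
apply: (@segment_connected R a b); first by exists c.
- exists [set t : R^o | exists2 d : R, 0 < d &
      forall s, `|s - t| < d -> [|a, b|] s -> E s].
    rewrite openE => t [d d0 Hd]; have d20 : 0 < d / 2 by rewrite divr_gt0.
    apply/nbhs_ballP; exists (d / 2) => // t' /= tt'; exists (d / 2) => //.
    move=> s st' Is; apply: Hd => //.
    rewrite -(subrK t' s) -addrA (le_lt_trans (ler_normD _ _)) //.
    by rewrite (splitr d) ltrD // distrC.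
  apply/seteqP; split => t.
    move=> [It Et]; split => //.
    by have [d d0 Hd] := Eopen t It Et; exists d => // s sd Is; exact: Hd.
  by move=> [It [d d0 Hd]]; split => //; apply: Hd; rewrite ?subrr ?normr0.
- exists (closure B); first exact: closed_closure.
  apply/seteqP; split => t; first by move=> Bt; split; [case: Bt|apply: subset_closure].
  move=> [It ct]; split => //; apply: Eclosed => // d d0.
  have [s [[Is Es] ts]] := ct _ (nbhsx_ballx (t : R^o) d d0).
  by exists s => //; rewrite distrC.
Qed.

Lemma at_left_of_interval (t d : R) (P : R -> Prop) : 0 < d ->
  (forall s, t - d < s < t -> P s) -> t^'- P.
Proof.
move=> d0 Pd; apply/nbhs_ballP; exists d => // s /= ts st; apply: Pd.
by rewrite st andbT; move: ts; rewrite /ball /= ltr_norml => /andP [h1 h2]; lra.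
Qed.

End RealSegments.

Section PathLifting.
Context {R : realType} {X Y : metricType R} {f : X -> Y}.
Hypothesis f_lh : local_homeomorphism f.
Local Notation "[| a , b |]" := (`[a, b]%classic : set R^o).

Lemma local_homeo_chart x : exists W (g : Y -> X), [/\ open W, W x, open (f @` W),
  (forall a, W a -> g (f a) = a) & {within f @` W, continuous g}].
Proof.
have [W [oW [Wx [ofW [_ [_ [_ [g [gf gc]]]]]]]]] := f_lh.2 x.
by exists W, g; split.
Qed.

Lemma chart_invK {W : set X} {g : Y -> X} {v : Y} :
  (forall a, W a -> g (f a) = a) -> (f @` W) v -> W (g v) /\ f (g v) = v.
Proof. by move=> gf [a Wa <-]; rewrite gf. Qed.

Definition is_lift (p : R -> Y) (x : X) (t : R) (q : R -> X) :=
  [/\ {within [|0, t|], continuous q}, q 0 = x &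
      forall u, [|0, t|] u -> f (q u) = p u].

Definition liftable (p : R -> Y) (x : X) (t : R) := exists q, is_lift p x t q.

Lemma lift_unique {a b c : R} {q1 q2 : R -> X} :
  {within [|a, b|], continuous q1} -> {within [|a, b|], continuous q2} ->
  (forall u, [|a, b|] u -> f (q1 u) = f (q2 u)) ->
  [|a, b|] c -> q1 c = q2 c -> forall t, [|a, b|] t -> q1 t = q2 t.
Proof.
move=> c1 c2 fq Ic qc.
apply: (@segment_connected_ind _ a b c (fun t => q1 t = q2 t) Ic qc).
- move=> t It qt; have [W [g [oW Wt _ gf _]]] := local_homeo_chart (q1 t).
  have [d1 d10 H1] := within_continuous_near c1 It (open_nbhs_nbhs (conj oW Wt)).
  have Wt' : W (q2 t) by rewrite -qt.
  have [d2 d20 H2] := within_continuous_near c2 It (open_nbhs_nbhs (conj oW Wt')).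
  exists (Num.min d1 d2); first by rewrite lt_min d10 d20.
  move=> s Is; rewrite lt_min => /andP [s1 s2].
  by rewrite -(gf _ (H1 s Is s1)) -(gf _ (H2 s Is s2)) fq.
- move=> t It Hn; apply: metric_hausdorff => A B nA nB.
  have [d1 d10 H1] := within_continuous_near c1 It nA.
  have [d2 d20 H2] := within_continuous_near c2 It nB.
  have [s Is []] := Hn (Num.min d1 d2) (ltac:(by rewrite lt_min d10 d20)).
  rewrite lt_min => /andP [s1 s2] qs.
  by exists (q1 s); split; [apply: H1|rewrite qs; apply: H2].
Qed.

Lemma lift_in_chart {a b c : R} {q : R -> X} {p : R -> Y} {W : set X} {g : Y -> X} :
  (forall a, W a -> g (f a) = a) -> {within f @` W, continuous g} ->
  {within [|a, b|], continuous q} -> {within [|a, b|], continuous p} ->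
  (forall u, [|a, b|] u -> f (q u) = p u) ->
  (forall u, [|a, b|] u -> (f @` W) (p u)) ->
  [|a, b|] c -> W (q c) -> forall t, [|a, b|] t -> q t = g (p t).
Proof.
move=> gf gc qc pc qp pW Ic Wqc.
apply: (lift_unique qc (within_comp_continuous pc pW gc) _ Ic).
  by move=> u Iu /=; rewrite qp //; have [] := chart_invK gf (pW u Iu).
by rewrite /= -qp ?gf.
Qed.

Lemma lift_near_in_chart {t d s t' : R} {q : R -> X} {p : R -> Y} {W : set X}
    {g : Y -> X} :
  (forall a, W a -> g (f a) = a) -> {within f @` W, continuous g} ->
  {within [|0, 1|], continuous q} -> {within [|0, 1|], continuous p} ->
  (forall u, [|0, 1|] u -> f (q u) = p u) ->
  (forall u, [|0, 1|] u -> `|u - t| < d -> (f @` W) (p u)) ->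
  [|0, 1|] s -> [|0, 1|] t' -> `|s - t| < d -> `|t' - t| < d ->
  W (q s) -> q t' = g (p t').
Proof.
move=> gf gc qc pc qp pW Is It' st t't Wqs.
have /in_segmentP [s0 s1] := Is; have /in_segmentP [t'0 t'1] := It'.
move: st t't; rewrite !ltr_norml => /andP [st1 st2] /andP [tt1 tt2].
pose a := Num.min s t'; pose b := Num.max s t'.
have [as_ at'] : a <= s /\ a <= t' by rewrite !ge_min !lexx orbT.
have [sb t'b] : s <= b /\ t' <= b by rewrite !le_max !lexx orbT.
have a0 : 0 <= a by rewrite le_min s0 t'0.
have b1 : b <= 1 by rewrite ge_max s1 t'1.
have ta : t - d < a by rewrite lt_min; apply/andP; split; lra.
have bt : b < t + d by rewrite gt_max; apply/andP; split; lra.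
have sub01 : [|a, b|] `<=` [|0, 1|] by apply: subset_segment.
have Ias : [|a, b|] s by apply/in_segmentP.
have Iat' : [|a, b|] t' by apply/in_segmentP.
apply: (lift_in_chart gf gc (continuous_subspaceW sub01 qc)
  (continuous_subspaceW sub01 pc) _ _ Ias Wqs _ Iat').
  by move=> u /sub01; exact: qp.
move=> u /[dup] /sub01 Iu /in_segmentP [u1 u2]; apply: pW => //.
by rewrite ltr_norml; apply/andP; split; lra.
Qed.

Lemma liftable_le {p : R -> Y} {x : X} {s t : R} :
  s <= t -> liftable p x t -> liftable p x s.
Proof.
move=> st [q [qc q0 qp]]; exists q; split => //.
  by apply: continuous_subspaceW qc; apply: subset_segment.
by move=> u Iu; apply: qp; apply: subset_segment Iu.
Qed.

Lemma lift_extend {p : R -> Y} {x : X} {s t : R} {q : R -> X} {W : set X}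
    {g : Y -> X} :
  0 <= s -> s <= t -> is_lift p x s q ->
  (forall a, W a -> g (f a) = a) -> {within f @` W, continuous g} ->
  W (q s) -> (forall u, [|s, t|] u -> (f @` W) (p u)) ->
  {within [|s, t|], continuous p} -> liftable p x t.
Proof.
move=> s0 st [qc q0 qp] gf gc Wqs pW pc.
pose q' u := if u <= s then q u else g (p u).
exists q'; split; first last.
- move=> u /in_segmentP [u0 ut]; rewrite /q'; case: ifP => us.
    by apply: qp; apply/in_segmentP.
  have : [|s, t|] u by apply/in_segmentP; split => //; rewrite ltW // ltNge us.
  by move/pW => /(chart_invK gf) [].
- by rewrite /q' s0.
have -> : [|0, t|] = [|0, s|] `|` [|s, t|].
  apply/seteqP; split => u; last first.
    by case=> /in_segmentP [h1 h2]; apply/in_segmentP; split; lra.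
  move=> /in_segmentP [u0 ut]; have [us|us] := lerP u s.
    by left; apply/in_segmentP.
  by right; apply/in_segmentP; split => //; rewrite ltW.
apply: withinU_continuous; [exact: interval_closed|exact: interval_closed|..].
- apply: (subspace_eq_continuous _ qc) => u /set_mem /in_segmentP [_ us].
  by rewrite /q' /from_subspace us.
- apply: (subspace_eq_continuous _ (within_comp_continuous pc pW gc)).
  move=> u /set_mem /in_segmentP [su _]; rewrite /q' /from_subspace /=.
  case: ifP => // us; have -> : u = s by apply/eqP; rewrite eq_le us su.
  by rewrite -qp ?gf //; exact: segment_ub.
Qed.

Lemma liftable_near {p : R -> Y} {x : X} {t : R} :
  {within [|0, 1|], continuous p} -> [|0, 1|] t -> liftable p x t ->
  exists2 d : R, 0 < d & forall s, [|0, 1|] s -> `|s - t| < d -> liftable p x s.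
Proof.
move=> pc It [q lq]; have [qc _ qp] := lq.
have /in_segmentP [t0 t1] := It.
have [W [g [oW Wq ofW gf gc]]] := local_homeo_chart (q t).
have fWpt : (f @` W) (p t).
  by exists (q t) => //; apply: qp; apply/in_segmentP; split; lra.
have [d d0 Hd] := within_continuous_near pc It (open_nbhs_nbhs (conj ofW fWpt)).
exists d => // s /in_segmentP [s0 s1]; rewrite ltr_norml => /andP [sd1 sd2].
have [st|ts] := lerP s t; first by apply: (liftable_le st); exists q.
apply: (lift_extend t0 (ltW ts) lq gf gc Wq).
  move=> u /in_segmentP [h1 h2]; apply: Hd; first by apply/in_segmentP; split; lra.
  by rewrite ltr_norml; apply/andP; split; lra.
by apply: continuous_subspaceW pc; apply: subset_segment; lra.
Qed.

Section LiftedFamily.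
Variables (U : set Y) (H : Y -> R -> Y) (L : Y -> R -> X) (x0 : X).
Hypothesis H_cont :
  {within U `*` `[0, 1]%classic, continuous (fun z : Y * R => H z.1 z.2)}.
Hypothesis H_path : forall y, U y -> {within [|0, 1|], continuous (H y)}.
Hypothesis L_lift : forall y, U y -> is_lift (H y) x0 1 (L y).

Definition lift_continuous_at (y1 : Y) (t : R) :=
  forall N, nbhs (L y1 t) N -> nbhs y1 (fun y => U y -> N (L y t)).

(* Near t, the lifts L y all run through one chart (W, g) and hence agree
   with g \o H y, whose dependence on y is continuous. *)
Lemma lift_continuous_at_transfer y1 t : U y1 -> [|0, 1|] t ->
  exists2 e : R, 0 < e & forall s t', [|0, 1|] s -> [|0, 1|] t' ->
    `|s - t| < e -> `|t' - t| < e ->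
    lift_continuous_at y1 s -> lift_continuous_at y1 t'.
Proof.
move=> Uy1 It; have [Lc1 _ Lp1] := L_lift y1 Uy1.
have [W [g [oW Wz ofW gf gc]]] := local_homeo_chart (L y1 t).
have fWH : (f @` W) (H y1 t) by exists (L y1 t) => //; rewrite Lp1.
have [M [nM [d1 d10 HM]]] :=
  jointly_continuous_near H_cont Uy1 It (open_nbhs_nbhs (conj ofW fWH)).
have [d2 d20 HW] := within_continuous_near Lc1 It (open_nbhs_nbhs (conj oW Wz)).
pose e := Num.min d1 d2.
have [ed1 ed2] : e <= d1 /\ e <= d2 by rewrite !ge_min !lexx orbT.
exists e; first by rewrite lt_min d10 d20.
move=> s t' Is It' st t't Ls N nN.
have Wt' : W (L y1 t') by apply: HW (lt_le_trans t't ed2).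
have fWt' : (f @` W) (H y1 t') by rewrite -Lp1 //; exists (L y1 t').
have gHt' : g (H y1 t') = L y1 t' by rewrite -Lp1 // gf.
have gN : nbhs (H y1 t') (fun v => (f @` W) v -> N (g v)).
  by move: gc => /subspace_continuousP /(_ _ fWt' N); rewrite /from_subspace gHt'; apply.
have [M' [nM' [d3 d30 HM']]] := jointly_continuous_near H_cont Uy1 It' gN.
have nW : nbhs y1 (fun y => U y -> W (L y s)).
  by apply: Ls; apply: open_nbhs_nbhs; split => //; apply: HW (lt_le_trans st ed2).
apply: filterS (filterI (filterI nW nM) nM') => y [[WLs My] M'y] Uy.
have [Lc _ Lp] := L_lift y Uy.
have inW u : [|0, 1|] u -> `|u - t| < e -> (f @` W) (H y u).
  by move=> Iu ut; apply: HM (lt_le_trans ut ed1).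
rewrite (lift_near_in_chart gf gc Lc (H_path y Uy) Lp inW Is It' st t't (WLs Uy)).
by apply: HM'; rewrite ?subrr ?normr0 //; apply: inW.
Qed.

Lemma lift_family_continuous y1 t : U y1 -> [|0, 1|] t -> lift_continuous_at y1 t.
Proof.
move=> Uy1; have I0 : [|0, 1|] 0 := segment_lb ler01.
have start : lift_continuous_at y1 0.
  move=> N nN; apply: filterE => y Uy.
  have [_ -> _] := L_lift y Uy; have [_ h _] := L_lift y1 Uy1.
  by rewrite -h; exact: nbhs_singleton.
apply: (@segment_connected_ind _ 0 1 0 _ I0 start).
  move=> t' It' Et'; have [e e0 He] := lift_continuous_at_transfer y1 t' Uy1 It'.
  by exists e => // s Is st; apply: (He t' s) => //; rewrite subrr normr0.
move=> t' It' Hn; have [e e0 He] := lift_continuous_at_transfer y1 t' Uy1 It'.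
have [s Is [st Es]] := Hn e e0.
by apply: (He s t') => //; rewrite subrr normr0.
Qed.

End LiftedFamily.

Section WeaklyProper.
Hypothesis f_wp : weakly_proper f.

Lemma lift_endpoints_cluster {p : R -> Y} {x : X} {t : R} :
  {within [|0, 1|], continuous p} -> f x = p 0 -> 0 < t -> t <= 1 ->
  (forall s, 0 <= s -> s < t -> liftable p x s) ->
  exists xs : X, forall d : R, 0 < d -> forall S, nbhs xs S ->
    exists s q, [/\ 0 <= s, s < t, t - d < s, is_lift p x s q & S (q s)].
Proof.
move=> pc fx t0 t1 Hlt.
have /choice [Q HQ] : forall s, exists q, 0 <= s -> s < t -> is_lift p x s q.
  move=> s; have [[s0 st]|nst] := pselect (0 <= s /\ s < t).
    by have [q lq] := Hlt s s0 st; exists q.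
  by exists (fun _ => x) => s0 st; case: nst.
pose K := p @` [|0, 1|].
have cK : compact K by apply: continuous_compact pc _; exact: segment_compact.
have Kx : (f @^-1` K) x.
  by exists 0 => //; exact: segment_lb ler01.
pose C := connected_component (f @^-1` K) x.
have cC : compact C := f_wp.2 _ cK _ Kx.
have QC s : 0 <= s -> s < t -> C (Q s s).
  move=> s0 st; have [qc q0 qp] := HQ s s0 st.
  apply: (connected_component_max (B := Q s @` [|0, s|])).
  + by exists 0 => //; exact: segment_lb.
  + move=> z [u Iu <-]; rewrite /preimage /= qp //; exists u => //.
    by apply: subset_segment Iu; lra.
  + by apply: connected_continuous_connected qc; exact: segment_connected.
  + by exists s => //; exact: segment_ub.
pose F := (fun s => Q s s) @ t^'-.
have FC : F C.
  apply: (@at_left_of_interval _ t t (fun s => C (Q s s)) t0) => s /andP [h1 h2].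
  by apply: QC; lra.
have [xs [_ clxs]] := cC F _ FC.
exists xs => d d0 S nS.
pose e := Num.min d t.
have e0 : 0 < e by rewrite lt_min d0 t0.
have [ed et] : e <= d /\ e <= t by rewrite !ge_min !lexx orbT.
pose S1 := [set z | exists s, [/\ 0 <= s, s < t, t - d < s & z = Q s s]].
have FS1 : F S1.
  apply: (@at_left_of_interval _ t e (fun s => S1 (Q s s)) e0) => s /andP [h1 h2].
  by exists s; split => //; lra.
have [_ [[s [s0 st ds ->]] Ss]] := clxs S1 S FS1 nS.
by exists s, (Q s); split => //; exact: HQ.
Qed.

Lemma liftable_left_limit {p : R -> Y} {x : X} {t : R} :
  {within [|0, 1|], continuous p} -> f x = p 0 -> [|0, 1|] t -> 0 < t ->
  (forall s, 0 <= s -> s < t -> liftable p x s) -> liftable p x t.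
Proof.
move=> pc fx It t0 Hlt; have /in_segmentP [_ t1] := It.
have [xs clu] := lift_endpoints_cluster pc fx t0 t1 Hlt.
have fxs : f xs = p t.
  apply: metric_hausdorff => A B nA nB.
  have [d d0 Hd] := within_continuous_near pc It nB.
  have [s [q [s0 st ds [_ _ qp] fqA]]] := clu d d0 _ (f_lh.1 xs A nA).
  exists (f (q s)); split => //; rewrite qp; last by apply/in_segmentP; split; lra.
  apply: Hd; first by apply/in_segmentP; split; lra.
  by rewrite ltr_norml; apply/andP; split; lra.
have [W [g [oW Wxs ofW gf gc]]] := local_homeo_chart xs.
have fWpt : (f @` W) (p t) by exists xs.
have [d d0 Hd] := within_continuous_near pc It (open_nbhs_nbhs (conj ofW fWpt)).
have [s [q [s0 st ds lq Wqs]]] := clu d d0 _ (open_nbhs_nbhs (conj oW Wxs)).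
apply: (lift_extend s0 (ltW st) lq gf gc Wqs).
  move=> u /in_segmentP [u1 u2]; apply: Hd; first by apply/in_segmentP; split; lra.
  by rewrite ltr_norml; apply/andP; split; lra.
by apply: continuous_subspaceW pc; apply: subset_segment; lra.
Qed.

Lemma path_lift {p : R -> Y} {x : X} :
  {within [|0, 1|], continuous p} -> f x = p 0 -> liftable p x 1.
Proof.
move=> pc fx.
have I0 : [|0, 1|] 0 := segment_lb ler01.
have I1 : [|0, 1|] 1 := segment_ub ler01.
have lift0 : liftable p x 0.
  exists (fun _ => x); split => //.
    by apply: continuous_subspaceT; exact: cst_continuous.
  by move=> u /in_segmentP [h1 h2]; have -> : u = 0 by lra.
apply: (@segment_connected_ind _ 0 1 0 (liftable p x) I0 lift0 _ _ 1 I1).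
  by move=> t It; exact: liftable_near.
move=> t It Hn; have [tle|t0] := lerP t 0.
  by have /in_segmentP [t0 _] := It; have -> : t = 0 by lra.
apply: liftable_left_limit => // s s0 st.
have ts : 0 < t - s by rewrite subr_gt0.
have [s' _ [ts' ls']] := Hn (t - s) ts.
by apply: (liftable_le _ ls'); move: ts'; rewrite ltr_norml => /andP [h1 h2]; lra.
Qed.

Lemma path_lift_choice : exists L : X -> (R -> Y) -> R -> X,
  forall x p, {within [|0, 1|], continuous p} -> f x = p 0 -> is_lift p x 1 (L x p).
Proof.
have /choice [L HL] : forall xp : X * (R -> Y), exists q : R -> X,
    {within [|0, 1|], continuous xp.2} -> f xp.1 = xp.2 0 -> is_lift xp.2 xp.1 1 q.
  move=> [x p] /=.
  have [[pc fx]|npc] := pselect ({within [|0, 1|], continuous p} /\ f x = p 0).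
    by have [q lq] := path_lift pc fx; exists q.
  by exists (fun _ => x) => pc fx; case: npc.
by exists (fun x p => L (x, p)) => x p; exact: (HL (x, p)).
Qed.

End WeaklyProper.

Definition sheet_map (L : X -> (R -> Y) -> R -> X) (H : Y -> R -> Y) (x : X) (y : Y) :
  X := L x (H y) 1.

Definition sheet (L : X -> (R -> Y) -> R -> X) (U : set Y) (H : Y -> R -> Y) (x : X) :
  set X := [set z | U (f z) /\ sheet_map L H x (f z) = z].

Section Sheets.
Context {L : X -> (R -> Y) -> R -> X} {y0 : Y} {U : set Y} {H : Y -> R -> Y}.
Hypothesis L_lift : forall x p, {within [|0, 1|], continuous p} -> f x = p 0 ->
  is_lift p x 1 (L x p).
Hypothesis U_open : open U.
Hypothesis H_cont :
  {within U `*` `[0, 1]%classic, continuous (fun z : Y * R => H z.1 z.2)}.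
Hypothesis H_path : forall y, U y -> {within [|0, 1|], continuous (H y)}.
Hypothesis H_ends : forall y, U y -> H y 0 = y0 /\ H y 1 = y.

Local Notation sheet_map := (sheet_map L H).
Local Notation sheet := (sheet L U H).

Lemma sheet_lift x y : f x = y0 -> U y -> is_lift (H y) x 1 (L x (H y)).
Proof. by move=> fx Uy; apply: L_lift; [exact: H_path|rewrite fx (H_ends y Uy).1]. Qed.

Lemma f_sheet_map x y : f x = y0 -> U y -> f (sheet_map x y) = y.
Proof.
move=> fx Uy; have [_ _ Lp] := sheet_lift x y fx Uy.
by rewrite /sheet_map Lp ?(H_ends y Uy).2 //; exact: segment_ub ler01.
Qed.

Lemma sheet_map_continuous x : f x = y0 -> forall y1, U y1 ->
  forall N, nbhs (sheet_map x y1) N -> nbhs y1 (fun y => U y -> N (sheet_map x y)).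
Proof.
move=> fx y1 Uy1; apply: (@lift_family_continuous U H (fun y => L x (H y)) x
  H_cont H_path (sheet_lift x ^~ fx) y1 1 Uy1).
exact: segment_ub ler01.
Qed.

(* Lifting the reversed path t |-> H (f z) (1 - t) from z lands in the fibre
   over y0 at a point whose sheet contains z. *)
Lemma preimage_sheets : f @^-1` U = \bigcup_(i in [set: {x | f x = y0}]) sheet (sval i).
Proof.
apply/seteqP; split => z; last by move=> [i _ [Uz _]].
move=> Uz; set y := f z; have [H0 H1] := H_ends y Uz.
have rc := within_continuous_rev01 (H_path y Uz).
have fz : f z = H y (1 - 0) by rewrite subr0 H1.
have [rl r0 rp] := L_lift z (fun t => H y (1 - t)) rc fz.
have I0 : [|0, 1|] 0 := segment_lb ler01.
have I1 : [|0, 1|] 1 := segment_ub ler01.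
set r := L z _ in rl r0 rp.
have fr1 : f (r 1) = y0 by rewrite rp // subrr H0.
exists (exist _ (r 1) fr1) => //; split => //=.
have [Lc L0 Lp] := sheet_lift (r 1) y fr1 Uz.
rewrite /sheet_map (lift_unique Lc (within_continuous_rev01 rl) _ I0 _ 1 I1).
- by rewrite subrr r0.
- move=> u Iu; rewrite Lp // rp; last exact: segment01_rev.
  by rewrite opprB addrC subrK.
- by rewrite L0 subr0.
Qed.

Lemma sheets_disjoint x1 x2 z : f x1 = y0 -> f x2 = y0 ->
  sheet x1 z -> sheet x2 z -> x1 = x2.
Proof.
move=> fx1 fx2 [Uz e1] [_ e2].
have [Lc1 L01 Lp1] := sheet_lift x1 (f z) fx1 Uz.
have [Lc2 L02 Lp2] := sheet_lift x2 (f z) fx2 Uz.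
have I0 : [|0, 1|] 0 := segment_lb ler01.
have I1 : [|0, 1|] 1 := segment_ub ler01.
rewrite -L01 -L02; apply: (lift_unique Lc1 Lc2 _ I1) => //.
  by move=> u Iu; rewrite Lp1 // Lp2.
by move: e1 e2; rewrite /sheet_map => -> ->.
Qed.

Lemma sheet_open x : f x = y0 -> open (sheet x).
Proof.
move=> fx; rewrite openE => z [Uz sz].
have [W [g [oW Wz ofW gf gc]]] := local_homeo_chart z.
have nfz : nbhs (f z) (fun y => U y -> W (sheet_map x y)).
  by apply: sheet_map_continuous => //; rewrite sz; exact: open_nbhs_nbhs.
have nz : nbhs z (f @^-1` (fun y => U y -> W (sheet_map x y))) := f_lh.1 z _ nfz.
have nU : nbhs z (f @^-1` U) := f_lh.1 z _ (open_nbhs_nbhs (conj U_open Uz)).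
apply: filterS (filterI (filterI nz nU) (open_nbhs_nbhs (conj oW Wz))).
move=> w [[Ww Uw] Ww']; split => //.
have Ws : W (sheet_map x (f w)) := Ww Uw.
by rewrite -(gf _ Ws) f_sheet_map // gf.
Qed.

Lemma sheet_homeo x : f x = y0 -> homeo_onto f (sheet x) U.
Proof.
move=> fx; split; first exact: continuous_subspaceT f_lh.1.
split.
  apply/seteqP; split => [y [z [Uz _] <-]|y Uy]; first exact: Uz.
  have fs := f_sheet_map x y fx Uy.
  by exists (sheet_map x y) => //; split; rewrite fs.
split; first by move=> a b [_ ea] [_ eb] fab; rewrite -ea -eb fab.
exists (sheet_map x); split; first by move=> a [].
apply/subspace_continuousP => y1 Uy1 N nN.
exact: sheet_map_continuous.
Qed.

End Sheets.

End PathLifting.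

Theorem mainTheorem4 (R : realType) (X Y : metricType R)
  (P : set (R -> Y)) (f : X -> Y) :
  (forall p, P p -> is_path p) ->
  P_connected P ->
  locally_P_contractible P ->
  local_homeomorphism f ->
  weakly_proper f ->
  covering_projection f.
Proof.
move=> P_path _ P_contr f_lh f_wp.
have [L L_lift] := path_lift_choice f_lh f_wp.
split => [|y0]; first exact: f_lh.1.
have [U [U_open [Uy0 [H [H_cont [_ [_ [H_ends P_H]]]]]]]] := P_contr y0.
have H_path y : U y -> is_path (H y) by move=> Uy; exact: P_path (P_H y Uy).
exists U; split => //; split => //.
exists {x | f x = y0}, (fun i => sheet (f := f) L U H (sval i)); split; [|split].
- exact: preimage_sheets.
- move=> [x1 fx1] [x2 fx2] ne; apply/seteqP; split => // z [z1 z2]; case: ne.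
  have e12 := sheets_disjoint f_lh L_lift H_path H_ends _ _ _ fx1 fx2 z1 z2.
  by subst x2; rewrite (Prop_irrelevance fx1 fx2).
- move=> [x fx] /=; split.
    exact: (sheet_open f_lh L_lift U_open H_cont H_path H_ends _ fx).
  exact: (sheet_homeo f_lh L_lift H_cont H_path H_ends _ fx).
Qed.
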